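(* Let $r\geq2$ and let $F$ be an $r$-graph. Let $c,a>0$ be fixed constants such that $c\cdot n^a\leq\mathit{ex}(n,F)$, and suppose that $d=d(n)$ satisfies $d=\Omega(1)$ and $d=o(n^{a-1})$. Then any $F$-freeness tester in $r$-graphs must perform $\Omega(n^{1-1/a}d^{-1/a})$ queries, when restricted to input $r$-graphs on $n$ vertices of average degree $d\pm o(d)$.
   Context: $\mathit{ex}(n,F)$ is the maximum number of edges of an $F$-free $r$-graph on $n$ vertices ($F$-free: containing no subgraph isomorphic to $F$). Testing model (general $r$-graphs model): the input is an $r$-graph $G$ on $n$ vertices with $m$ edges, where for each vertex the incident edges are ordered. An algorithm accesses $G$ only through queries: a vertex-set query asks whether a given $r$-set of vertices is an edge; a neighbour query asks, for a vertex $v$ and integer $i$, for the $i$-th edge incident to $v$ (returned as the other $r-1$ vertices, or an error if $\deg(v)<i$). $G$ is $\varepsilon$-far from a property $\mathcal P$ if at least $\varepsilon m$ edges must be added or deleted to obtain an $r$-graph in $\mathcal P$. A tester for $\mathcal P$ is a (possibly randomized) algorithm given a distance parameter $\varepsilon$ and query access to $G$ that accepts with probability at least $2/3$ if $G\in\mathcal P$ and rejects with probability at least $2/3$ if $G$ is $\varepsilon$-far from $\mathcal P$. Its query complexity is the number of queries performed. *)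

From Stdlib Require Import Reals.
From mathcomp Require Import all_boot.
Open Scope R_scope.

Set Implicit Arguments.
Unset Strict Implicit.
Unset Printing Implicit Defensive.

Definition is_rgraph (r n : nat) (E : {set {set 'I_n}}) : bool :=
  [forall e in E, #|e| == r].

Definition contains (n k : nat) (E : {set {set 'I_n}}) (EF : {set {set 'I_k}})
  : bool :=
  [exists phi : {ffun 'I_k -> 'I_n},
     injectiveb phi && [forall e in EF, (phi @: e) \in E]].

Definition Ffree (n k : nat) (E : {set {set 'I_n}}) (EF : {set {set 'I_k}})
  : bool := ~~ contains E EF.

(* ex(n,F): maximum number of edges of an F-free r-graph on n vertices
   (0 if there is none). *)
Definition ex (r k : nat) (EF : {set {set 'I_k}}) (n : nat) : nat :=
  \max_(E : {set {set 'I_n}} | is_rgraph r E && Ffree E EF) #|E|.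

(* An input: an r-graph together with, for every vertex, the ordered list
   of its incident edges. *)
Record input (n : nat) := Input {
  iedges : {set {set 'I_n}};
  iord : 'I_n -> seq {set 'I_n}
}.

Definition valid_input (r n : nat) (G : input n) : Prop :=
  is_rgraph r (iedges G) /\
  forall v : 'I_n, uniq (iord G v) /\
    forall e : {set 'I_n}, (e \in iord G v) = (e \in iedges G) && (v \in e).

Inductive query (n : nat) : Type :=
  | QVertexSet : {set 'I_n} -> query n
  | QNeighbour : 'I_n -> nat -> query n.   (* i-th edge incident to v (1-based) *)

Inductive answer (n : nat) : Type :=
  | ABool : bool -> answer n
  | AEdge : option {set 'I_n} -> answer n. (* None = error *)

Definition answer_query (n : nat) (G : input n) (q : query n) : answer n :=
  match q with
  | QVertexSet X => @ABool n (X \in iedges G)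
  | QNeighbour v i =>
      if ((0 < i) && (i <= size (iord G v)))%N then
        @AEdge n (Some (nth set0 (iord G v) i.-1 :\ v))
      else @AEdge n None
  end.

(* A deterministic adaptive query algorithm = a decision tree. *)
Inductive qtree (n : nat) : Type :=
  | QLeaf : bool -> qtree n                         (* true = accept *)
  | QNode : query n -> (answer n -> qtree n) -> qtree n.

Fixpoint run (n : nat) (t : qtree n) (G : input n) : bool :=
  match t with
  | QLeaf b => b
  | QNode q k => run (k (answer_query G q)) G
  end.

Fixpoint nqueries (n : nat) (t : qtree n) (G : input n) : nat :=
  match t with
  | QLeaf _ => 0
  | QNode q k => (nqueries (k (answer_query G q)) G).+1
  end.

(* A randomized algorithm = a finite probability distribution over decision
   trees, given as a list of (probability, tree). *)
Definition ralg (n : nat) := seq (R * qtree n).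

Definition is_distribution (n : nat) (T : ralg n) : Prop :=
  (forall p, List.In p T -> (0 <= fst p)) /\
  List.fold_right (fun (p : R * qtree n) (acc : R) => Rplus (fst p) acc) 0 T = 1.

Definition accept_prob (n : nat) (T : ralg n) (G : input n) : R :=
  List.fold_right (fun (p : R * qtree n) (acc : R) => Rplus (if run (snd p) G then fst p else 0) acc) 0 T.

Definition far_from_Ffree (r n k : nat) (EF : {set {set 'I_k}}) (eps : R)
  (E : {set {set 'I_n}}) : Prop :=
  forall H : {set {set 'I_n}}, is_rgraph r H -> Ffree H EF ->
    (eps * INR #|E| <= INR #|(E :\: H) :|: (H :\: E)|).

Definition avg_degree (r n : nat) (E : {set {set 'I_n}}) : R :=
  (INR r * INR #|E| / INR n).

Definition is_Ffree_tester (r n k : nat) (EF : {set {set 'I_k}})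
  (K : {set {set 'I_n}} -> Prop) (eps : R) (T : ralg n) : Prop :=
  is_distribution T /\
  forall G : input n, valid_input r G -> K (iedges G) ->
    (Ffree (iedges G) EF -> (2 / 3 <= accept_prob T G)) /\
    (far_from_Ffree r EF eps (iedges G) -> (accept_prob T G <= 1 / 3)).

Definition performs_at_least (r n : nat) (K : {set {set 'I_n}} -> Prop)
  (T : ralg n) (q : R) : Prop :=
  exists p, List.In p T /\ (0 < fst p) /\
    exists G : input n, valid_input r G /\ K (iedges G) /\
      (q <= INR (nqueries (snd p) G)).

(* Split the vertices into about n/M blocks of size M ~ (n d / (r c))^(1/a): then
   ex(M, F) >= c M^a leaves room for an F-free graph with about n d / r edges inside a
   single block, i.e. of average degree about d.  On the same block we can also place a
   graph with the same number of edges containing every r-subset of some s-set; it is far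
   from F-free, because every k-subset misses an edge of any F-free graph, so by double
   counting an F-free graph misses at least C(s,r)/C(k,r) of these r-subsets.  A tester
   making fewer than n/(12 M) queries sees, on the empty graph, fewer than a third of the
   blocks, so by averaging some block is visited with probability less than 1/3; planting
   either graph there moves the acceptance probability by less than 1/3, which contradicts
   the gap between 2/3 and 1/3. *)

From Stdlib Require Import Reals Lra Lia Classical ZArith.
From mathcomp Require Import all_boot zify.
Set Implicit Arguments.
Unset Strict Implicit.

Lemma subset_of_card (T : finType) (A : {set T}) m :
  (m <= #|A|)%N -> exists2 B : {set T}, B \subset A & #|B| = m.
Proof.
rewrite -bin_gt0 -cards_draws => /card_gt0P [B].
by rewrite inE => /andP [BA /eqP cardB]; exists B.
Qed.

Lemma extend_injective (A B : finType) (U : {set A}) (h : A -> B) :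
  {in U &, injective h} -> (#|A| <= #|B|)%N ->
  exists2 h' : A -> B, injective h' & {in U, h' =1 h}.
Proof.
move=> injh leAB.
pose S := enum (~: U); pose T := enum (~: (h @: U)).
have leST : (size S <= size T)%N.
  rewrite -!cardE; have := cardsC U; have := cardsC (h @: U).
  by rewrite card_in_imset //; lia.
have index_lt x : x \notin U -> (index x S < size T)%N.
  by move=> xU; apply: leq_trans leST; rewrite index_mem mem_enum inE.
have nth_notin x x0 : x \notin U -> nth x0 T (index x S) \notin h @: U.
  by move=> xU; have := mem_nth x0 (index_lt x xU); rewrite mem_enum inE.
exists (fun x => if x \in U then h x else nth (h x) T (index x S)); last first.
  by move=> x ->.
move=> x y; case: ifPn => xU; case: ifPn => yU.
- exact: injh.
- by move=> hxy; have := nth_notin y (h y) yU; rewrite -hxy imset_f.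
- by move=> hxy; have := nth_notin x (h x) xU; rewrite hxy imset_f.
- rewrite (set_nth_default (h y) (h x)) ?index_lt //.
  move/eqP; rewrite nth_uniq ?index_lt ?enum_uniq // => /eqP sameidx.
  by rewrite -(nth_index x (_ : x \in S)) ?sameidx ?nth_index // mem_enum inE.
Qed.

Lemma containsS n k (E E' : {set {set 'I_n}}) (EF : {set {set 'I_k}}) :
  E \subset E' -> contains E EF -> contains E' EF.
Proof.
move=> sEE' /existsP [phi /andP [phi_inj /forallP phiE]].
apply/existsP; exists phi; rewrite phi_inj; apply/forallP => e.
by apply/implyP => eF; apply: (subsetP sEE'); move/implyP: (phiE e); apply.
Qed.

Lemma FfreeS n k (E E' : {set {set 'I_n}}) (EF : {set {set 'I_k}}) :
  E \subset E' -> Ffree E' EF -> Ffree E EF.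
Proof. by move=> sEE'; apply: contra; apply: containsS. Qed.

Lemma contains_imset m n k (f : 'I_m -> 'I_n) (E : {set {set 'I_m}})
    (EF : {set {set 'I_k}}) :
  injective f -> (k <= m)%N -> contains [set f @: e | e : {set 'I_m} in E] EF -> contains E EF.
Proof.
move=> f_inj km /existsP [phi /andP [/injectiveP phi_inj /forallP phiE]].
pose U := [set x | phi x \in codom f].
pose h x := odflt (widen_ord km x) [pick y | f y == phi x].
have f_h x : x \in U -> f (h x) = phi x.
  rewrite inE => /codomP [y fy]; rewrite /h.
  by case: pickP => [y' /eqP // | /(_ y)]; rewrite fy eqxx.
have h_inj : {in U &, injective h}.
  by move=> x y xU yU hxy; apply: phi_inj; rewrite -f_h // hxy f_h.
have [|h' h'_inj h'h] := extend_injective h_inj; first by rewrite !card_ord.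
apply/existsP; exists [ffun x => h' x]; apply/andP; split.
  by apply/injectiveP => x y; rewrite !ffunE; apply: h'_inj.
apply/forallP => e; apply/implyP => eF.
have /imsetP [e' e'E phi_e] := implyP (phiE e) eF.
have eU : {subset e <= U}.
  move=> x xe; rewrite inE; have : phi x \in f @: e' by rewrite -phi_e imset_f.
  by case/imsetP => y _ ->; apply: codom_f.
suff -> : [ffun x => h' x] @: e = e' by [].
apply: (imset_inj f_inj); rewrite -phi_e -imset_comp.
by apply: eq_in_imset => x xe; rewrite /= ffunE h'h ?f_h ?eU.
Qed.

Lemma Ffree_missing_edge n k r (EF : {set {set 'I_k}}) (H : {set {set 'I_n}})
    (S : {set 'I_n}) :
  is_rgraph r EF -> Ffree H EF -> #|S| = k ->
  exists e : {set 'I_n}, [/\ e \subset S, #|e| = r & e \notin H].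
Proof.
move=> EF_r HF cardS; apply: NNPP => no_missing; move/negP: HF; apply.
pose phi := [ffun x : 'I_k => enum_val (cast_ord (esym cardS) x)].
apply/existsP; exists phi; apply/andP; split.
  by apply/injectiveP => x y; rewrite !ffunE => /enum_val_inj /cast_ord_inj.
apply/forallP => e; apply/implyP => eF; apply/negPn/negP => eH; apply: no_missing.
exists (phi @: e); split => //.
- by apply/subsetP => _ /imsetP [x _ ->]; rewrite ffunE; apply: enum_valP.
- rewrite card_imset; last by move=> x y; rewrite !ffunE => /enum_val_inj /cast_ord_inj.
  by apply/eqP; move/forallP: EF_r => /(_ e); rewrite eF.
Qed.

Lemma card_supersets_le (T : finType) (V e : {set T}) k :
  e \subset V ->
  (#|[set S : {set T} | [&& S \subset V, #|S| == k & e \subset S]]|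
    <= 'C(#|V| - #|e|, k - #|e|))%N.
Proof.
move=> eV; set A := [set S | _].
have diff_inj : {in A &, injective (fun S => S :\: e)}.
  move=> S1 S2; rewrite !inE => /and3P [_ _ eS1] /and3P [_ _ eS2] eqD.
  by rewrite -(setID S1 e) -(setID S2 e) eqD (setIidPr eS1) (setIidPr eS2).
rewrite -(card_in_imset diff_inj) -(cardsDS eV) -cards_draws.
apply: subset_leq_card; apply/subsetP => S' /imsetP [S].
rewrite !inE => /and3P [SV /eqP <- eS] ->.
by rewrite setSD //= cardsDS.
Qed.

Lemma bin_mul_bin s k r : (r <= k <= s)%N ->
  ('C(s, k) * 'C(k, r) = 'C(s, r) * 'C(s - r, k - r))%N.
Proof.
move=> /andP [rk ks].
have rs : (r <= s)%N := leq_trans rk ks.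
have kr_sr : (k - r <= s - r)%N by lia.
have fact_pos : (0 < r`! * (k - r)`! * (s - k)`!)%N by rewrite !muln_gt0 !fact_gt0.
apply/eqP; rewrite -(eqn_pmul2r fact_pos); apply/eqP.
transitivity ('C(s, k) * (k`! * (s - k)`!))%N.
  by rewrite -(bin_fact rk); lia.
rewrite (bin_fact ks) -(bin_fact rs) -(bin_fact kr_sr).
have -> : (s - r - (k - r) = s - k)%N by lia.
lia.
Qed.

Lemma Ffree_misses_many n k r (EF : {set {set 'I_k}}) (H : {set {set 'I_n}})
    (V : {set 'I_n}) :
  is_rgraph r EF -> Ffree H EF -> (r <= k <= #|V|)%N ->
  ('C(#|V|, r)
    <= #|[set e : {set 'I_n} | [&& e \subset V, #|e| == r & e \notin H]]| * 'C(k, r))%N.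
Proof.
move=> EF_r HF /andP [rk kV].
set Mis := [set e | _].
have double_count : ('C(#|V|, k) <= #|Mis| * 'C(#|V| - r, k - r))%N.
  pose Ks := [set S : {set 'I_n} | S \subset V & #|S| == k].
  rewrite -cards_draws -/Ks -sum1_card.
  apply: (@leq_trans (\sum_(S in Ks) \sum_(e in Mis | e \subset S) 1)%N).
    apply: leq_sum => S; rewrite inE => /andP [SV /eqP cardS].
    have [e [eS cardE eH]] := Ffree_missing_edge EF_r HF cardS.
    rewrite sum1dep_card; apply/card_gt0P; exists e.
    by rewrite !inE eS cardE eH (subset_trans eS SV) eqxx.
  rewrite (exchange_big_dep (mem Mis)) /=; last by move=> S e _ /andP [].
  rewrite -sum_nat_const; apply: leq_sum => e; rewrite inE => /and3P [eV /eqP cardE _].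
  rewrite sum1dep_card -cardE; apply: leq_trans (card_supersets_le k eV).
  apply: subset_leq_card; apply/subsetP => S.
  by rewrite !inE => /andP [/andP [-> ->] /andP [_ ->]].
have bin_pos : (0 < 'C(#|V| - r, k - r))%N by rewrite bin_gt0; lia.
rewrite -(leq_pmul2r bin_pos) -bin_mul_bin ?rk // mulnAC leq_pmul2r ?bin_gt0 //.
Qed.

Lemma bin_approx r e s0 M : (2 * r <= s0 <= M)%N -> ('C(s0, r) <= e <= 'C(M, r))%N ->
  exists2 s, (s0 <= s <= M)%N & ('C(s, r) <= e <= 2 * 'C(s, r))%N.
Proof.
move=> /andP [rs0 s0M] /andP [s0e eM].
pose P s := (s <= M)%N && ('C(s, r) <= e)%N.
have exP : exists s, P s by exists s0; rewrite /P s0M s0e.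
have boundP s : P s -> (s <= M)%N by case/andP.
case: (ex_maxnP exP boundP) => s /andP [sM se] s_max.
have s0s : (s0 <= s)%N by apply: s_max; rewrite /P s0M s0e.
exists s; first by rewrite s0s sM.
rewrite se /=; have [eqsM | ltsM] := eqVneq s M; first by rewrite eqsM; lia.
have e_lt : (e < 'C(s.+1, r))%N.
  rewrite ltnNge; apply/negP => le_e; have := s_max s.+1.
  by rewrite /P le_e andbT ltnn ltn_neqAle ltsM sM => /(_ isT).
have := mul_bin_down s.+1 r; rewrite /= => binS.
suff : ((s.+1 - r) * 'C(s.+1, r) <= (s.+1 - r) * (2 * 'C(s, r)))%N.
  by rewrite leq_mul2l; lia.
by rewrite -binS mulnA leq_mul2r; apply/orP; right; lia.
Qed.

Lemma ex_leq_bin r k (EF : {set {set 'I_k}}) M : (ex r EF M <= 'C(M, r))%N.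
Proof.
apply/bigmax_leqP => E /andP [E_r _].
rewrite -[M in 'C(M, _)]card_ord -cardsT -cards_draws; apply: subset_leq_card.
by apply/subsetP => e eE; rewrite inE subsetT; move/forallP: E_r => /(_ e); rewrite eE.
Qed.

Lemma ex_attained r k (EF : {set {set 'I_k}}) M : (0 < ex r EF M)%N ->
  exists E : {set {set 'I_M}}, [/\ is_rgraph r E, Ffree E EF & #|E| = ex r EF M].
Proof.
rewrite /ex; case: (pickP (fun E : {set {set 'I_M}} => is_rgraph r E && Ffree E EF)) => [E0 E0P | noP].
  rewrite (bigmax_eq_arg E0 E0P); case: arg_maxnP => // E /andP [E_r EF_free] _.
  by exists E.
by rewrite big_pred0.
Qed.

Lemma rank_le_order r k (EF : {set {set 'I_k}}) M :
  is_rgraph r EF -> (k <= M)%N -> (0 < ex r EF M)%N -> (r <= k)%N.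
Proof.
move=> EF_r kM ex_pos; have [EF0 | [e eF]] := set_0Vmem EF.
  move: ex_pos; rewrite /ex big_pred0 // => E; apply/negbTE; rewrite negb_and negbK.
  apply/orP; right; apply/existsP; exists [ffun x => widen_ord kM x].
  apply/andP; split; last by rewrite EF0; apply/forallP => e; rewrite inE.
  by apply/injectiveP => x y; rewrite !ffunE => /(congr1 val) /= /val_inj.
move/forallP: EF_r => /(_ e); rewrite eF => /eqP <-.
by rewrite -[k in (_ <= k)%N]card_ord max_card.
Qed.

Lemma far_of_clique n k r (EF : {set {set 'I_k}}) (E : {set {set 'I_n}})
    (V : {set 'I_n}) :
  is_rgraph r EF -> (r <= k <= #|V|)%N ->
  (forall e : {set 'I_n}, e \subset V -> #|e| = r -> e \in E) -> (#|E| <= 2 * 'C(#|V|, r))%N ->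
  far_from_Ffree r EF (1 / (2 * INR 'C(k, r))) E.
Proof.
move=> EF_r rkV clique small H _ HF.
have rk : (r <= k)%N by case/andP: rkV.
set sym := _ :|: _.
have many := Ffree_misses_many EF_r HF rkV; set Mis := [set e | _] in many.
have Mis_sym : (#|Mis| <= #|sym|)%N.
  apply: subset_leq_card; apply/subsetP => e; rewrite !inE => /and3P [eV /eqP re eH].
  by rewrite eH clique.
have bin_pos : (0 < INR 'C(k, r))%R by apply: lt_0_INR; apply/ltP; rewrite bin_gt0.
have /leP/le_INR : (#|E| <= 2 * 'C(k, r) * #|sym|)%N.
  apply: (leq_trans small); rewrite -mulnA leq_mul2l /= mulnC (leq_trans many) //.
  by rewrite leq_mul2r Mis_sym orbT.
rewrite !mult_INR /= => le_sym.
apply: (Rle_trans _ (1 / (2 * INR 'C(k, r)) * ((1 + 1) * INR 'C(k, r) * INR #|sym|))).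
  by apply: Rmult_le_compat_l => //; apply: Rlt_le; apply: Rdiv_lt_0_compat; lra.
by right; move: (INR #|sym|) bin_pos => s Cpos; field; lra.
Qed.

Definition block n M j : {set 'I_n} := [set x : 'I_n | x %/ M == j].

Definition block_supported n M j (E : {set {set 'I_n}}) : Prop :=
  forall e, e \in E -> e != set0 /\ e \subset block n M j.

Lemma block_shift_subproof n M j (x : 'I_M) : (j.+1 * M <= n)%N -> (x + j * M < n)%N.
Proof. by move=> jM; have := ltn_ord x; rewrite mulSn in jM; lia. Qed.

Definition block_shift n M j (jM : (j.+1 * M <= n)%N) (x : 'I_M) : 'I_n :=
  Ordinal (block_shift_subproof x jM).

Lemma block_shift_inj n M j (jM : (j.+1 * M <= n)%N) : injective (block_shift jM).
Proof. by move=> x y /(congr1 val) /= /addIn /val_inj. Qed.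

Lemma block_shift_block n M j (jM : (j.+1 * M <= n)%N) (A : {set 'I_M}) :
  block_shift jM @: A \subset block n M j.
Proof.
apply/subsetP => _ /imsetP [x _ ->]; rewrite inE /=.
by rewrite divnDMl ?divn_small ?add0n ?(leq_ltn_trans _ (ltn_ord x)).
Qed.

Lemma rgraph_block_supported n M j r (E : {set {set 'I_n}}) :
  (0 < r)%N -> is_rgraph r E -> (forall e, e \in E -> e \subset block n M j) ->
  block_supported M j E.
Proof.
move=> r_pos E_r E_block e eE; split; last exact: E_block.
by rewrite -card_gt0; move/forallP: E_r => /(_ e); rewrite eE => /eqP ->.
Qed.

Lemma rgraphS r n (E E' : {set {set 'I_n}}) :
  E \subset E' -> is_rgraph r E' -> is_rgraph r E.
Proof.
move=> sEE' /forallP E'_r; apply/forallP => e; apply/implyP => eE.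
by move/implyP: (E'_r e); apply; apply: (subsetP sEE').
Qed.

Lemma rgraph_imset r m n (f : 'I_m -> 'I_n) (E : {set {set 'I_m}}) :
  injective f -> is_rgraph r E -> is_rgraph r [set f @: e | e : {set 'I_m} in E].
Proof.
move=> f_inj /forallP E_r; apply/forallP => fe; apply/implyP => /imsetP [e eE ->].
by rewrite card_imset //; move/implyP: (E_r e); apply.
Qed.

Lemma Ffree_block_graph n k r (EF : {set {set 'I_k}}) M en j :
  (0 < r)%N -> (j.+1 * M <= n)%N -> (k <= M)%N -> (0 < en <= ex r EF M)%N ->
  exists E : {set {set 'I_n}},
    [/\ is_rgraph r E, #|E| = en, Ffree E EF & block_supported M j E].
Proof.
move=> r_pos jM kM /andP [en_pos en_ex].
have [Emax [Emax_r Emax_free card_max]] := ex_attained (leq_trans en_pos en_ex).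
have [|E0 E0_sub card_E0] := @subset_of_card _ Emax en; first by rewrite card_max.
have f_inj := @block_shift_inj _ _ _ jM.
have E_r := rgraph_imset f_inj (rgraphS E0_sub Emax_r).
exists [set block_shift jM @: e | e : {set 'I_M} in E0]; split => //.
- by rewrite card_imset //; apply: imset_inj.
- by apply/negP => /(contains_imset f_inj kM); apply/negP; apply: FfreeS Emax_free.
- apply: (rgraph_block_supported r_pos E_r) => fe /imsetP [e _ ->].
  exact: block_shift_block.
Qed.

Lemma padded_clique (T : finType) (V W : {set T}) r en :
  V \subset W -> ('C(#|V|, r) <= en <= 'C(#|W|, r))%N ->
  exists E : {set {set T}}, [/\ #|E| = en,
    E \subset [set e : {set T} | e \subset W & #|e| == r] &
    forall e : {set T}, e \subset V -> #|e| = r -> e \in E].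
Proof.
move=> VW /andP [V_en en_W].
pose KV := [set e : {set T} | e \subset V & #|e| == r].
pose KW := [set e : {set T} | e \subset W & #|e| == r].
have KV_KW : KV \subset KW.
  by apply/subsetP => e; rewrite !inE => /andP [eV ->]; rewrite (subset_trans eV VW).
have [|X X_sub card_X] := @subset_of_card _ (KW :\: KV) (en - 'C(#|V|, r)).
  by rewrite cardsDS // !cards_draws; lia.
exists (KV :|: X); split.
- have disj : KV :&: X = set0.
    apply/setP => e; rewrite inE in_set0; apply/negP => /andP [eKV eX].
    by move: (subsetP X_sub e eX); rewrite inE eKV.
  by rewrite cardsU disj cards0 card_X cards_draws; lia.
- by rewrite subUset KV_KW (subset_trans X_sub (subsetDl _ _)).
- by move=> e eV /eqP re; rewrite !inE eV re.
Qed.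

Lemma far_block_graph n k r (EF : {set {set 'I_k}}) M en j :
  is_rgraph r EF -> (0 < r)%N -> (r <= k)%N -> (j.+1 * M <= n)%N ->
  (maxn k (2 * r) <= M)%N -> ('C(maxn k (2 * r), r) <= en <= 'C(M, r))%N ->
  exists E : {set {set 'I_n}}, [/\ is_rgraph r E, #|E| = en,
     far_from_Ffree r EF (1 / (2 * INR 'C(k, r))) E & block_supported M j E].
Proof.
move=> EF_r r_pos rk jM s0M en_range.
pose W := block_shift jM @: [set: 'I_M].
have card_W : #|W| = M by rewrite card_imset ?cardsT ?card_ord //; apply: block_shift_inj.
have [|s /andP [s0s sM] /andP [s_en en_s]] := bin_approx _ en_range.
  by rewrite s0M leq_maxr.
have [|V VW card_V] := @subset_of_card _ W s; first by rewrite card_W.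
have [|E [card_E E_W clique]] := padded_clique (r := r) (en := en) VW.
  by rewrite card_V card_W s_en; case/andP: en_range.
have E_r : is_rgraph r E.
  by apply/forallP => e; apply/implyP => /(subsetP E_W); rewrite inE => /andP [].
exists E; split => //.
- apply: (far_of_clique EF_r _ clique); last by rewrite card_E card_V.
  by rewrite rk card_V (leq_trans (leq_maxl _ _) s0s).
- apply: (rgraph_block_supported r_pos E_r) => e /(subsetP E_W); rewrite inE => /andP [eW _].
  exact: subset_trans eW (block_shift_block jM _).
Qed.

Definition graph_input n (E : {set {set 'I_n}}) : input n :=
  Input E (fun v => enum [set e in E | v \in e]).

Lemma graph_input_valid r n (E : {set {set 'I_n}}) :
  is_rgraph r E -> valid_input r (graph_input E).
Proof.
move=> E_r; split => // v; split; first exact: enum_uniq.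
by move=> e; rewrite /= mem_enum inE.
Qed.

Fixpoint query_trace n (t : qtree n) (G : input n) (L : nat) : seq (query n) :=
  match L, t with
  | 0, _ | _, QLeaf _ => [::]
  | L'.+1, QNode q k => q :: query_trace (k (answer_query G q)) G L'
  end.

Lemma size_query_trace n (t : qtree n) G L : (size (query_trace t G L) <= L)%N.
Proof. by elim: L t => [|L IH] [b|q k] //=; apply: IH. Qed.

Lemma run_agree n (G G' : input n) L (t : qtree n) :
  (forall q, List.In q (query_trace t G' L) -> answer_query G q = answer_query G' q) ->
  (minn L (nqueries t G') <= nqueries t G)%N /\
  ((nqueries t G' < L)%N -> run t G = run t G').
Proof.
elim: L t => [|L IH] [b|q k] same /=; try by split => //; rewrite ?min0n.
rewrite (same q (or_introl erefl)).
have [IH1 IH2] := IH (k (answer_query G' q)) (fun q' q'_in => same q' (or_intror q'_in)).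
by rewrite minnSS ltnS.
Qed.

(* An empty [X] is never an edge, so the block assigned to it does not matter. *)
Definition query_block n M (q : query n) : nat :=
  match q with
  | QVertexSet X => if [pick x in X] is Some x then x %/ M else 0
  | QNeighbour v _ => v %/ M
  end.

Lemma answer_off_block n M j (E : {set {set 'I_n}}) (q : query n) :
  block_supported M j E -> query_block M q != j ->
  answer_query (graph_input E) q = answer_query (graph_input set0) q.
Proof.
move=> E_block; case: q => [X | v i] /= q_off.
  rewrite in_set0; congr ABool; apply/negP => XE; have [X_neq0 X_block] := E_block X XE.
  move: q_off; case: pickP => [x xX | X_empty]; last first.
    by case/set0Pn: X_neq0 => x; rewrite X_empty.
  by have := subsetP X_block x xX; rewrite inE => ->.
have -> : [set e in (set0 : {set {set 'I_n}}) | v \in e] = set0.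
  by apply/setP => e; rewrite !inE.
suff -> : [set e in E | v \in e] = set0 by [].
apply/setP => e; rewrite !inE; apply/negP => /andP [eE ve].
by have := subsetP (E_block e eE).2 v ve; rewrite inE (negbTE q_off).
Qed.

Fixpoint sumR (B : nat) (f : nat -> R) : R :=
  match B with 0 => 0 | B'.+1 => sumR B' f + f B' end.

Lemma sumRD B f g : sumR B (fun j => f j + g j) = sumR B f + sumR B g.
Proof. by elim: B => [|B IH] /=; lra. Qed.

Lemma sumR_ge B f y : (forall j, (j < B)%N -> y <= f j) -> INR B * y <= sumR B f.
Proof.
elim: B => [|B IH] f_ge; first by rewrite /=; lra.
rewrite S_INR /=; have := f_ge B (ltnSn B); have := IH (fun j jB => f_ge j (ltnW jB)); lra.
Qed.

Lemma sumR_indicator (s : seq nat) p B :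
  sumR B (fun j => if j \in s then p else 0) = p * INR (count (mem s) (iota 0 B)).
Proof.
elim: B => [|B IH]; first by rewrite /=; lra.
rewrite -[B.+1]addn1 iotaD count_cat plus_INR addn1 /= IH.
by case: (B \in s); rewrite /= ?plus_INR /=; lra.
Qed.

Lemma count_mem_iota_le (s : seq nat) B : (count (mem s) (iota 0 B) <= size s)%N.
Proof.
rewrite -size_filter; apply: uniq_leq_size; first exact/filter_uniq/iota_uniq.
by move=> x; rewrite mem_filter => /andP [].
Qed.

Lemma exists_notin_iota (s : seq nat) B : (size s < B)%N -> exists2 j, (j < B)%N & j \notin s.
Proof.
move=> sB; have : has (predC (mem s)) (iota 0 B).
  rewrite has_count; have := count_predC (mem s) (iota 0 B).
  by have := count_mem_iota_le s B; rewrite size_iota; lia.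
by case/hasP => j; rewrite mem_iota add0n => /andP [_ jB] /= js; exists j.
Qed.

Definition block_weight n (P : qtree n -> seq nat) (T : ralg n) (j : nat) : R :=
  List.fold_right (fun (p : R * qtree n) acc => Rplus (if j \in P p.2 then p.1 else 0) acc) 0 T.

Lemma sum_block_weight_le n (P : qtree n -> seq nat) (T : ralg n) B L :
  (forall p, List.In p T -> 0 <= p.1) -> (forall t, (size (P t) <= L)%N) ->
  sumR B (block_weight P T) <=
    INR L * List.fold_right (fun (p : R * qtree n) acc => Rplus p.1 acc) 0 T.
Proof.
move=> T_pos P_small; elim: T T_pos => [|p T IH] T_pos.
  by rewrite Rmult_0_r; elim: B => [|B IHB] /=; [apply: Rle_refl | rewrite Rplus_0_r].
have -> : sumR B (block_weight P (p :: T)) =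
    sumR B (fun j => if j \in P p.2 then p.1 else 0) + sumR B (block_weight P T).
  by rewrite -sumRD.
rewrite sumR_indicator /=.
have p_pos := T_pos p (or_introl erefl).
have /le_INR count_le : (count (mem (P p.2)) (iota 0 B) <= L)%coq_nat.
  by apply/leP; apply: leq_trans (count_mem_iota_le _ _) (P_small _).
rewrite Rmult_plus_distr_l (Rmult_comm (INR L)); apply: Rplus_le_compat.
  exact: Rmult_le_compat_l p_pos count_le.
exact: IH (fun p' p'T => T_pos p' (or_intror p'T)).
Qed.

Lemma light_block_exists n (P : qtree n -> seq nat) (T : ralg n) B L :
  is_distribution T -> (forall t, (size (P t) <= L)%N) -> (3 * L < B)%N ->
  exists2 j, (j < B)%N & block_weight P T j < 1 / 3.
Proof.
move=> [T_pos T_sum] P_small LB; apply: NNPP => no_light.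
have heavy j : (j < B)%N -> 1 / 3 <= block_weight P T j.
  by move=> jB; apply: Rnot_lt_le => light; apply: no_light; exists j.
have := sumR_ge heavy; have := sum_block_weight_le B T_pos P_small.
have /le_INR : ((3 * L).+1 <= B)%coq_nat by apply/leP.
by rewrite T_sum S_INR mult_INR /=; lra.
Qed.

Lemma accept_prob_sub_le n (P : qtree n -> seq nat) (T : ralg n) (G1 G2 : input n) j :
  (forall p, List.In p T -> 0 <= p.1) ->
  (forall p, List.In p T -> 0 < p.1 -> j \notin P p.2 -> run p.2 G1 = run p.2 G2) ->
  accept_prob T G1 - accept_prob T G2 <= block_weight P T j.
Proof.
elim: T => [|p T IH] T_pos same_run /=; first by rewrite /block_weight /=; lra.
have := IH (fun p' p'T => T_pos p' (or_intror p'T)) (fun p' p'T => same_run p' (or_intror p'T)).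
rewrite /block_weight /=; have p_pos := T_pos p (or_introl erefl).
case: (boolP (j \in P p.2)) => jP; first by case: (run p.2 G1); case: (run p.2 G2); lra.
have [p_gt0 | <-] := Rle_lt_or_eq_dec 0 p.1 p_pos.
  by rewrite (same_run p (or_introl erefl) p_gt0 jP); case: (run p.2 G2); lra.
by case: (run p.2 G1); case: (run p.2 G2); lra.
Qed.

Lemma map_f_In (A : Type) (B : eqType) (f : A -> B) (s : seq A) x :
  List.In x s -> f x \in map f s.
Proof.
elim: s => //= y s IH [-> | /IH fx_s]; first by rewrite mem_head.
by rewrite inE fx_s orbT.
Qed.

Definition trace_blocks n M L (t : qtree n) : seq nat :=
  map (query_block M) (query_trace t (graph_input set0) L).

Lemma run_off_block n M j L (E : {set {set 'I_n}}) (t : qtree n) :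
  block_supported M j E -> j \notin trace_blocks M L t ->
  (minn L (nqueries t (graph_input set0)) <= nqueries t (graph_input E))%N /\
  ((nqueries t (graph_input set0) < L)%N -> run t (graph_input E) = run t (graph_input set0)).
Proof.
move=> E_block j_off; apply: run_agree => q q_trace; apply: answer_off_block E_block _.
by apply: contra j_off => /eqP <-; apply: map_f_In.
Qed.

Lemma tester_block_lower_bound n r k (EF : {set {set 'I_k}})
    (K : {set {set 'I_n}} -> Prop) eps (T : ralg n) M B L :
  is_Ffree_tester r EF K eps T -> (3 * L < B)%N ->
  (forall j, (j < B)%N -> exists E : {set {set 'I_n}},
     [/\ is_rgraph r E, K E, Ffree E EF & block_supported M j E]) ->
  (forall j, (j < B)%N -> exists E : {set {set 'I_n}},
     [/\ is_rgraph r E, K E, far_from_Ffree r EF eps E & block_supported M j E]) ->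
  performs_at_least r K T (INR L).
Proof.
move=> [T_distr T_tests] LB Ffree_blocks far_blocks; apply: NNPP => few_queries.
have short p E : List.In p T -> 0 < p.1 -> is_rgraph r E -> K E ->
    (nqueries p.2 (graph_input E) < L)%N.
  move=> pT p_pos E_r KE; rewrite ltnNge; apply/negP => many; apply: few_queries.
  exists p; split=> //; split=> //; exists (graph_input E).
  by split; [exact: graph_input_valid | split=> //; apply/le_INR/leP].
have blocks_small (t : qtree n) : (size (trace_blocks M L t) <= L)%N.
  by rewrite size_map size_query_trace.
have short0 p : List.In p T -> 0 < p.1 -> (nqueries p.2 (graph_input set0) < L)%N.
  move=> pT p_pos; have [|j jB j_off] := @exists_notin_iota (trace_blocks M L p.2) B.
    by have := blocks_small p.2; lia.
  have [E [E_r KE _ E_block]] := Ffree_blocks j jB.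
  have [lower _] := run_off_block E_block j_off.
  by move: lower (short p E pT p_pos E_r KE); rewrite geq_min; case/orP=> [|?]; lia.
have [j jB light] := light_block_exists T_distr blocks_small LB.
have [E1 [E1_r KE1 E1_free E1_block]] := Ffree_blocks j jB.
have [E2 [E2_r KE2 E2_far E2_block]] := far_blocks j jB.
have close : accept_prob T (graph_input E1) - accept_prob T (graph_input E2)
    <= block_weight (trace_blocks M L) T j.
  apply: accept_prob_sub_le => [|p pT p_pos j_off]; first by case: T_distr.
  have p_short := short0 p pT p_pos.
  by rewrite ((run_off_block E1_block j_off).2 p_short) (run_off_block E2_block j_off).2.
have [accept1 _] := T_tests _ (graph_input_valid E1_r) KE1.
have [_ reject2] := T_tests _ (graph_input_valid E2_r) KE2.
by have := accept1 E1_free; have := reject2 E2_far; lra.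
Qed.

Lemma Ffree_tester_queries_ge n r k (EF : {set {set 'I_k}})
    (K : {set {set 'I_n}} -> Prop) (T : ralg n) M en L :
  is_rgraph r EF -> (0 < r)%N -> (r <= k)%N -> (maxn k (2 * r) <= M)%N ->
  ('C(maxn k (2 * r), r) <= en <= ex r EF M)%N -> (3 * L < n %/ M)%N ->
  (forall E : {set {set 'I_n}}, #|E| = en -> K E) ->
  is_Ffree_tester r EF K (1 / (2 * INR 'C(k, r))) T ->
  performs_at_least r K T (INR L).
Proof.
move=> EF_r r_pos rk s0M /andP [s0_en en_ex] LB K_en T_tester.
have kM : (k <= M)%N := leq_trans (leq_maxl _ _) s0M.
have en_pos : (0 < en)%N.
  apply: leq_trans s0_en; rewrite bin_gt0; apply: leq_trans (leq_maxr _ _).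
  by rewrite leq_pmull.
have jM j : (j < n %/ M)%N -> (j.+1 * M <= n)%N.
  by move=> jB; apply: leq_trans (leq_divM n M); rewrite leq_mul2r jB orbT.
have en_ex' : (0 < en <= ex r EF M)%N by rewrite en_pos.
have en_bin : ('C(maxn k (2 * r), r) <= en <= 'C(M, r))%N.
  by rewrite s0_en (leq_trans en_ex (ex_leq_bin _ _ _)).
apply: (tester_block_lower_bound (M := M) T_tester LB) => j jB.
  have [E [E_r card_E E_free E_block]] := Ffree_block_graph r_pos (jM j jB) kM en_ex'.
  by exists E; split=> //; apply: K_en.
have [E [E_r card_E E_far E_block]] := far_block_graph EF_r r_pos rk (jM j jB) s0M en_bin.
by exists E; split=> //; apply: K_en.
Qed.

Lemma nat_floor x : 0 <= x -> exists m : nat, INR m <= x < INR m + 1.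
Proof.
move=> x_ge0; have [up_gt up_le] := archimed x.
have up_pos : (0 < up x)%Z by apply: lt_IZR; lra.
exists (Z.to_nat (up x - 1)); rewrite INR_IZR_INZ Z2Nat.id; last lia.
by rewrite minus_IZR /=; lra.
Qed.

Lemma nat_ge x : exists N : nat, x <= INR N.
Proof.
have [x_ge0 | x_lt0] := Rle_lt_dec 0 x; last by exists 0%N; rewrite /=; lra.
by have [m [_ x_lt]] := nat_floor x_ge0; exists m.+1; rewrite S_INR; lra.
Qed.

Lemma inv_INR_vanishes K delta : 0 < delta ->
  exists N : nat, forall n : nat, (N <= n)%N -> Rabs (K / INR n) <= delta.
Proof.
move=> delta_pos; have [N N_ge] := nat_ge (Rabs K / delta + 1); exists N => n Nn.
have n_ge : Rabs K / delta + 1 <= INR n by apply: Rle_trans N_ge (le_INR _ _ (leP Nn)).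
have K_delta : delta * (Rabs K / delta) = Rabs K by field; lra.
have q_ge0 : 0 <= Rabs K / delta.
  by apply: Rmult_le_pos (Rabs_pos K) _; left; apply: Rinv_0_lt_compat.
rewrite /Rdiv Rabs_mult Rabs_inv (Rabs_pos_eq (INR n) (pos_INR n)).
apply: (Rmult_le_reg_r (INR n)); first lra.
rewrite Rmult_assoc Rinv_l; last lra.
move: (Rabs K / delta) K_delta n_ge q_ge0 => q; nra.
Qed.

Lemma Rle_mul_ratio x c' D : 0 <= x -> 0 < c' <= D -> x <= x / c' * D.
Proof.
move=> x_ge0 [c'_pos c'_D]; rewrite -{1}[x]Rmult_1_r /Rdiv Rmult_assoc.
apply: Rmult_le_compat_l => //; apply: (Rmult_le_reg_r c') => //.
by rewrite (Rmult_comm (/ c')) Rmult_assoc Rinv_l ?Rmult_1_r; lra.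
Qed.

Lemma Rpower_gt0 x y : 0 < Rpower x y.
Proof. exact: exp_pos. Qed.

Lemma RpowerK x a : 0 < x -> a <> 0 -> Rpower (Rpower x a) (1 / a) = x.
Proof.
by move=> x_pos a_neq0; rewrite Rpower_mult (_ : a * (1 / a) = 1) ?Rpower_1 //; field.
Qed.

Lemma RpowerKV x a : 0 < x -> a <> 0 -> Rpower (Rpower x (1 / a)) a = x.
Proof.
by move=> x_pos a_neq0; rewrite Rpower_mult (_ : 1 / a * a = 1) ?Rpower_1 //; field.
Qed.

(* y <= n/20 makes n/(12 y) >= 5/3, enough to absorb rounding L up and n/M down. *)
Lemma thrice_lt_div (n M L : nat) (y : R) :
  1 <= y <= INR n / 20 -> y < INR M <= y + 1 -> INR L <= INR n / (12 * y) + 1 ->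
  (3 * L < n %/ M)%N.
Proof.
move=> [y_ge1 y_le] [M_gt M_le] L_le.
have M_pos : (0 < M)%N by apply/ltP/INR_lt; rewrite /=; lra.
have /lt_INR : (n < (n %/ M).+1 * M)%coq_nat by apply/ltP; apply: ltn_ceil.
rewrite mult_INR S_INR => n_lt.
have q_def : INR n / (12 * y) * (12 * y) = INR n by field; lra.
set q := INR n / (12 * y) in q_def L_le.
have q_ge : 5 / 3 <= q.
  apply: (Rmult_le_reg_r (12 * y)); first lra.
  by rewrite q_def; lra.
have B_ge0 := pos_INR (n %/ M).
have blocks_gt : 6 * q < INR (n %/ M) + 1.
  apply: (Rmult_lt_reg_r (2 * y)); first lra.
  have -> : 6 * q * (2 * y) = INR n by rewrite -q_def; ring.
  by apply: (Rlt_le_trans _ _ _ n_lt); apply: Rmult_le_compat_l; lra.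
apply/ltP/INR_lt; rewrite mult_INR /=; lra.
Qed.

Lemma avg_degree_floor r n (E : {set {set 'I_n}}) D :
  (0 < r)%N -> (0 < n)%N -> INR #|E| <= INR n * D / INR r < INR #|E| + 1 ->
  Rabs (avg_degree r E - D) <= INR r / INR n.
Proof.
move=> r_pos n_pos [E_le E_gt].
have n_gt0 : 0 < INR n by apply/lt_0_INR/ltP.
have r_gt0 : 0 < INR r by apply/lt_0_INR/ltP.
have u_pos : 0 < INR r / INR n by apply: Rdiv_lt_0_compat.
have scale : avg_degree r E = INR r / INR n * INR #|E|.
  by rewrite /avg_degree; field; lra.
have D_eq : INR n * D / INR r = D / (INR r / INR n) by field; lra.
have D_scale : INR r / INR n * (D / (INR r / INR n)) = D by field; lra.
rewrite D_eq in E_le E_gt; rewrite scale.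
have := Rmult_le_compat_l _ _ _ (Rlt_le _ _ u_pos) E_le.
have := Rmult_lt_compat_l _ _ _ u_pos E_gt.
move: (INR r / INR n) (D / (INR r / INR n)) D_scale => u v uv lt_u le_u.
by apply: Rabs_le; split; nra.
Qed.

Lemma performs_at_leastW r n (K : {set {set 'I_n}} -> Prop) (T : ralg n) q q' :
  q <= q' -> performs_at_least r K T q' -> performs_at_least r K T q.
Proof.
move=> le_q [p [pT [p_pos [G [G_valid [KG q'_le]]]]]].
by exists p; do 2!split=> //; exists G; do 2!split=> //; apply: Rle_trans le_q q'_le.
Qed.

Section BlockSize.

Variables (r : nat) (c a : R).
Hypotheses (r_pos : (0 < r)%N) (c_pos : 0 < c) (a_pos : 0 < a).

(* The real y with c y^a = n D / r: a block of about y vertices can carry an F-free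
   graph with n D / r edges. *)
Definition block_size (n : nat) (D : R) : R := Rpower (INR n * D / (INR r * c)) (1 / a).

Let r_gt0 : 0 < INR r.
Proof. exact/lt_0_INR/ltP. Qed.

Let rc_pos : 0 < INR r * c.
Proof. exact: Rmult_lt_0_compat. Qed.

Let density_pos n D : 0 < INR n -> 0 < D -> 0 < INR n * D / (INR r * c).
Proof. by move=> n_pos D_pos; apply: Rdiv_lt_0_compat => //; apply: Rmult_lt_0_compat. Qed.

Lemma block_size_pow n D : 0 < INR n -> 0 < D ->
  c * Rpower (block_size n D) a = INR n * D / INR r.
Proof.
move=> n_pos D_pos; rewrite /block_size (RpowerKV (density_pos n_pos D_pos)); last lra.
by field; split; lra.
Qed.

Lemma block_size_ge n D Y : 0 < INR n -> 0 < D -> 0 < Y ->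
  Rpower Y a * (INR r * c) <= INR n * D -> Y <= block_size n D.
Proof.
move=> n_pos D_pos Y_pos Ya_le; rewrite -(@RpowerK Y a) //; last lra.
apply: Rle_Rpower_l; first by apply: Rlt_le; apply: Rdiv_lt_0_compat; lra.
split; first exact: Rpower_gt0.
apply: (Rmult_le_reg_r (INR r * c)) => //.
by rewrite /Rdiv Rmult_assoc Rinv_l ?Rmult_1_r //; lra.
Qed.

Lemma block_size_le n D : 0 < INR n -> 0 < D ->
  D <= INR r * c * Rpower 20 (- a) * Rpower (INR n) (a - 1) -> block_size n D <= INR n / 20.
Proof.
move=> n_pos D_pos D_le.
have n20_pos : 0 < INR n / 20 by lra.
rewrite -[X in _ <= X](@RpowerK (INR n / 20) a) //; last lra.
apply: Rle_Rpower_l; first by apply: Rlt_le; apply: Rdiv_lt_0_compat; lra.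
split; first exact: density_pos.
have -> : Rpower (INR n / 20) a = INR n * (Rpower 20 (- a) * Rpower (INR n) (a - 1)).
  rewrite /Rdiv -Rpower_mult_distr //; last lra.
  have -> : Rpower (INR n) a = Rpower (INR n) (1 + (a - 1)) by congr Rpower; ring.
  have -> : Rpower (/ 20) a = Rpower 20 (- a).
    by rewrite /Rpower ln_Rinv; [congr exp; ring | lra].
  by rewrite Rpower_plus Rpower_1 //; ring.
rewrite /Rdiv Rmult_assoc; apply: Rmult_le_compat_l; first lra.
apply: (Rmult_le_reg_r (INR r * c)) => //.
by rewrite Rmult_assoc Rinv_l ?Rmult_1_r; lra.
Qed.

Lemma query_bound_eq n D : 0 < INR n -> 0 < D ->
  Rpower (INR r * c) (1 / a) / 12 * Rpower (INR n) (1 - 1 / a) * Rpower D (- (1 / a))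
  = INR n / (12 * block_size n D).
Proof.
move=> n_pos D_pos.
have ln_density : ln (INR n * D / (INR r * c)) = ln (INR n) + ln D - ln (INR r * c).
  have nD_pos : 0 < INR n * D by apply: Rmult_lt_0_compat.
  have rc_inv_pos : 0 < / (INR r * c) by apply: Rinv_0_lt_compat.
  by rewrite /Rdiv ln_mult // ln_mult // ln_Rinv //; ring.
rewrite /block_size /Rpower ln_density.
set E := 1 / a * (_ - _).
have -> : INR n / (12 * exp E) = exp (ln (INR n) + - E) / 12.
  by rewrite exp_plus exp_Ropp exp_ln //; field; have := exp_pos E; lra.
have -> : ln (INR n) + - E =
    1 / a * ln (INR r * c) + (1 - 1 / a) * ln (INR n) + - (1 / a) * ln D.
  by rewrite /E; field; lra.
by rewrite !exp_plus; field.
Qed.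


Lemma block_parameters (ex_M : nat -> nat) N0 s0 n D :
  0 < D -> (forall M, (N0 <= M)%N -> c * Rpower (INR M) a <= INR (ex_M M)) ->
  INR (maxn N0 s0) + 1 <= block_size n D <= INR n / 20 ->
  INR 'C(s0, r) + 1 <= INR n * D / INR r ->
  exists M en L : nat,
    [/\ (s0 <= M)%N, ('C(s0, r) <= en <= ex_M M)%N, (3 * L < n %/ M)%N,
        forall E : {set {set 'I_n}}, #|E| = en -> Rabs (avg_degree r E - D) <= INR r / INR n
      & INR n / (12 * block_size n D) <= INR L].
Proof.
move=> D_pos ex_ge [y_ge y_le] bin_le.
have y_pow : c * Rpower (block_size n D) a = INR n * D / INR r.
  by apply: block_size_pow => //; have := pos_INR (maxn N0 s0); lra.
set y := block_size n D in y_ge y_le y_pow *.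
have N0s0_ge0 := pos_INR (maxn N0 s0).
have n_pos : 0 < INR n by lra.
have q_pos : 0 < INR n / (12 * y) by apply: Rdiv_lt_0_compat; lra.
have y_ge0 : 0 <= y by lra.
have density_ge0 : 0 <= INR n * D / INR r by have := pos_INR 'C(s0, r); lra.
have [m [m_le m_gt]] := nat_floor y_ge0.
have [en [en_le en_gt]] := nat_floor density_ge0.
have [L [L_le L_gt]] := nat_floor (Rlt_le _ _ q_pos).
have N0s0_m : (maxn N0 s0 <= m)%N by apply/leP/INR_le; lra.
exists m.+1, en, L.+1; rewrite !S_INR; split.
- by apply: leq_trans (leq_maxr N0 s0) (leq_trans N0s0_m (leqnSn m)).
- apply/andP; split; first by apply/leP/INR_le; lra.
  apply/leP/INR_le; apply: Rle_trans (ex_ge _ _); last first.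
    by apply: leq_trans (leq_maxl N0 s0) (leq_trans N0s0_m (leqnSn m)).
  rewrite S_INR -y_pow in en_le *; apply: Rle_trans en_le _.
  apply: Rmult_le_compat_l; first lra.
  by apply: Rle_Rpower_l; lra.
- by apply: (thrice_lt_div (y := y)); rewrite ?S_INR; lra.
- move=> E card_E; apply: avg_degree_floor => //; first by apply/ltP/INR_lt; rewrite /=; lra.
  by rewrite card_E.
- lra.
Qed.

Lemma block_size_eventually c' Y K : 0 < c' -> 0 < Y ->
  exists N : nat, forall n : nat, (N <= n)%N -> forall D, c' <= D ->
    [/\ 0 < INR n, Y <= block_size n D & K <= INR n * D / INR r].
Proof.
move=> c'_pos Y_pos.
have [Na Na_ge] := nat_ge (Rpower Y a * (INR r * c) / c').
have [Nb Nb_ge] := nat_ge (K * INR r / c').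
exists (maxn (maxn Na Nb) 1) => n n_ge D D_ge.
have /le_INR n_geNa : (Na <= n)%coq_nat by apply/leP; lia.
have /le_INR n_geNb : (Nb <= n)%coq_nat by apply/leP; lia.
have n_pos : 0 < INR n by apply/lt_0_INR/ltP; lia.
have nc'_le : INR n * c' <= INR n * D by apply: Rmult_le_compat_l; lra.
have ge_div x : x / c' <= INR n -> x <= INR n * D.
  move=> x_le; apply: Rle_trans nc'_le; apply: (Rmult_le_reg_r (/ c')).
    exact: Rinv_0_lt_compat.
  by rewrite Rmult_assoc Rinv_r ?Rmult_1_r; lra.
split => //.
- apply: block_size_ge => //; first lra.
  exact/ge_div/(Rle_trans _ _ _ Na_ge).
- apply: (Rmult_le_reg_r (INR r)) => //.
  rewrite /Rdiv Rmult_assoc Rinv_l ?Rmult_1_r; last lra.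
  exact/ge_div/(Rle_trans _ _ _ Nb_ge).
Qed.
End BlockSize.

Unset Implicit Arguments.
Theorem proposition4p1
  (r : nat) (hr : (2 <= r)%N)
  (k : nat) (EF : {set {set 'I_k}}) (hF : is_rgraph r EF)
  (c a : R) (hc : (0 < c)) (ha : (0 < a))
  (hex : exists N0 : nat, forall n : nat, (N0 <= n)%N ->
           (c * Rpower (INR n) a <= INR (ex r EF n)))
  (d : nat -> R)
  (hd_lower : exists c' : R, (0 < c') /\
      exists N1 : nat, forall n : nat, (N1 <= n)%N -> (c' <= d n))
  (hd_upper : forall delta : R, (0 < delta) ->
      exists N2 : nat, forall n : nat, (N2 <= n)%N ->
        (Rabs (d n) <= delta * Rpower (INR n) (a - 1))) :
  exists eta : nat -> R,
    (forall delta : R, (0 < delta) ->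
       exists N3 : nat, forall n : nat, (N3 <= n)%N -> (Rabs (eta n) <= delta)) /\
    exists eps : R, (0 < eps) /\
    exists C : R, (0 < C) /\
    exists N : nat, forall n : nat, (N <= n)%N ->
      forall T : ralg n,
        is_Ffree_tester r EF
          (fun E => (Rabs (avg_degree r E - d n) <= eta n * d n)) eps T ->
        performs_at_least r
          (fun E => (Rabs (avg_degree r E - d n) <= eta n * d n)) T
          (C * Rpower (INR n) (1 - 1 / a) * Rpower (d n) (- (1 / a))).
Proof.
have [N0 ex_ge] := hex; have [c' [c'_pos [N1 d_ge]]] := hd_lower.
have r_pos : (0 < r)%N by lia.
have rk : (r <= k)%N.
  apply: (rank_le_order hF (leq_maxr N0 k)); apply/ltP/INR_lt.
  by have := ex_ge _ (leq_maxl N0 k); have := Rpower_gt0 (INR (maxn N0 k)) a; rewrite /=; nra.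
pose s0 := maxn k (2 * r).
(* This choice of delta makes the block size at most n/20 (block_size_le). *)
have [|N2 d_le] := hd_upper (INR r * c * Rpower 20 (- a)).
  by apply: Rmult_lt_0_compat (Rpower_gt0 _ _); apply: Rmult_lt_0_compat => //; apply/lt_0_INR/ltP.
have Y_pos : 0 < INR (maxn N0 s0) + 1 by have := pos_INR (maxn N0 s0); lra.
have [N3 large] := block_size_eventually r_pos hc ha (INR 'C(s0, r) + 1) c'_pos Y_pos.
exists (fun n => INR r / c' / INR n); split; first by move=> delta; apply: inv_INR_vanishes.
exists (1 / (2 * INR 'C(k, r))); split.
  by apply: Rdiv_lt_0_compat; [lra | apply: Rmult_lt_0_compat; [lra | apply/lt_0_INR/ltP; rewrite bin_gt0]].
exists (Rpower (INR r * c) (1 / a) / 12); split; first by have := Rpower_gt0 (INR r * c) (1 / a); lra.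
exists (maxn (maxn N1 N2) N3) => n n_ge T T_tester.
have D_ge : c' <= d n by apply: d_ge; lia.
have D_pos : 0 < d n by lra.
have D_le : d n <= INR r * c * Rpower 20 (- a) * Rpower (INR n) (a - 1).
  by apply: Rle_trans (Rle_abs _) (d_le n _); lia.
have [|n_pos y_ge bin_le] := large n _ (d n) D_ge; first lia.
have y_le := block_size_le r_pos hc ha n_pos D_pos D_le.
have [M [en [L [s0M en_range LB degree_ok q_le]]]] :=
  block_parameters r_pos hc ha D_pos ex_ge (conj y_ge y_le) bin_le.
rewrite query_bound_eq //; apply: performs_at_leastW q_le _.
apply: (Ffree_tester_queries_ge hF r_pos rk s0M en_range LB _ T_tester) => E card_E.
apply: Rle_trans (degree_ok E card_E) _.
rewrite (_ : INR r / c' / INR n = INR r / INR n / c'); last by field; lra.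
by apply: Rle_mul_ratio; [apply: Rlt_le; apply: Rdiv_lt_0_compat => //; apply/lt_0_INR/ltP | lra].
Qed.
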